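(* Let $k$ be a positive integer, let $L=\{\ell_1,\ldots,\ell_s\}\subset[0,k-1]$ with $\ell_1<\cdots<\ell_s$, and let $L^C=[0,k-1]\setminus L=\{\ell'_1,\ldots,\ell'_{k-s}\}$ with $\ell'_1<\cdots<\ell'_{k-s}$. Suppose $L$ contains $b$ full runs of consecutive integers with lengths $m_i$ ($1\le i\le b$) and $L^C$ contains $b'$ full runs of consecutive integers with lengths $m'_j$ ($1\le j\le b'$). Then \[\prod_{i=1}^{b}m_i!\cdot\frac{\binom{k}{k-\ell_1}\binom{k-\ell_1-1}{k-\ell_2}\cdots\binom{k-\ell_{s-1}-1}{k-\ell_s}}{\prod_{i=1}^s(\ell_i+1)(k-\ell_i)}\cdot\prod_{j=1}^{b'}m'_j!\cdot\frac{\binom{k}{k-\ell'_1}\binom{k-\ell'_1-1}{k-\ell'_2}\cdots\binom{k-\ell'_{k-s-1}-1}{k-\ell'_{k-s}}}{\prod_{i=1}^{k-s}(\ell'_i+1)(k-\ell'_i)}=\frac{1}{k!}.\]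
   Context: $[a,b]=\{a,\ldots,b\}$. For a finite set of integers $\{x_1<\cdots<x_t\}$, a subset $\{x_m,\ldots,x_{m+p}\}$ is a run if $x_{m+i}=x_m+i$ for $0\le i\le p$; it is a full run if moreover ($m=1$ or $x_{m-1}<x_m-1$) and ($m+p=t$ or $x_{m+p+1}>x_{m+p}+1$). The set decomposes uniquely into full runs; the length of a run is its cardinality. *)

From mathcomp Require Import all_boot all_order all_algebra.
Set Implicit Arguments. Unset Strict Implicit. Unset Printing Implicit Defensive.
Import Order.TTheory GRing.Theory Num.Theory.

Definition elems (k : nat) (L : {set 'I_k}) : seq nat :=
  sort leq [seq val i | i in L].

Definition full_run (S : seq nat) (a m : nat) : bool :=
  [&& 0 < m, all (fun x => x \in S) (iota a m),
      (a == 0) || (a.-1 \notin S) & a + m \notin S].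

Definition run_fact_prod (k : nat) (S : seq nat) : nat :=
  \prod_(0 <= a < k) \prod_(1 <= m < k.+1 | full_run S a m) m`!.

(* binom(k, k-l1) binom(k-l1-1, k-l2) ... binom(k-l_{s-1}-1, k-l_s);
   called with p = 0 the first factor is binom(k - 0, k - l1). *)
Fixpoint binom_chain (k p : nat) (S : seq nat) : nat :=
  if S is l :: S' then 'C(k - p, k - l) * binom_chain k l.+1 S' else 1.

Definition term (k : nat) (S : seq nat) : rat :=
  ((run_fact_prod k S)%:R * (binom_chain k 0 S)%:R
   / (\prod_(l <- S) ((l + 1) * (k - l)))%:R)%R.

From mathcomp Require Import all_boot all_order all_algebra.
From mathcomp Require Import zify ring.
Import Order.TTheory GRing.Theory Num.Theory.

Set Implicit Arguments.
Unset Strict Implicit.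
Unset Printing Implicit Defensive.

(* The full runs of the complement of a sorted S inside [p, k) are the gaps
   between consecutive elements of p - 1 :: S ++ [k], so the run factorials of
   the complement form the product of the gap factorials (l_{i+1} - l_i - 1)!.
   Peeling off the first element l of S, 'C(k-p, k-l) (k-l)! (l-p)! = (k-p)!
   shows by induction that
     binom_chain * prod (k - l_i) * (run factorials of the complement) = k!.
   Applying this to L and to its complement, the numerators of the two terms
   multiply to k!, while the denominators multiply to k!^2, since
   {(l+1)(k-l) : l < k} splits between L and its complement. *)

Definition full_runP (P : pred nat) (a m : nat) : bool :=
  [&& 0 < m, all P (iota a m), (a == 0) || ~~ P a.-1 & ~~ P (a + m)].

Definition run_fact_prod_on (n : nat) (P : pred nat) (p q : nat) : nat :=
  \prod_(p <= a < q) \prod_(1 <= m < n.+1 | full_runP P a m) m`!.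

Lemma run_fact_prodE k S : run_fact_prod k S = run_fact_prod_on k (mem S) 0 k.
Proof. by []. Qed.

Lemma full_runP_eq_from (P Q : pred nat) a m :
  (forall x, a.-1 <= x -> P x = Q x) -> full_runP P a m = full_runP Q a m.
Proof.
move=> ePQ; rewrite /full_runP ePQ // ePQ; last by lia.
by rewrite (@eq_in_all _ P Q) // => x; rewrite mem_iota => /andP[? _]; apply: ePQ; lia.
Qed.

Lemma full_runP_notin (P : pred nat) a m : ~~ P a -> full_runP P a m = false.
Proof. by case: m => [|m] notPa; rewrite /full_runP //= (negbTE notPa). Qed.

Section RunsOfInterval.

Variables (P : pred nat) (p l : nat).
Hypothesis P_interval : forall x, x <= l -> P x = (p <= x < l).

Lemma full_runP_interval a m :
  p <= a < l -> full_runP P a m = (a == p) && (m == l - p).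
Proof.
move=> /andP[pa al]; rewrite /full_runP.
have [a_p | ap] := eqVneq a p; last first.
  have -> : (a == 0) = false by lia.
  have -> : P a.-1 by rewrite P_interval; lia.
  by rewrite /= !andbF.
subst a => /=.
apply/and4P/eqP => [[m_gt0 /allP Pam _ notPam] | ->].
  have [lt_m | gt_m | //] := ltngtP m (l - p).
    by move: notPam; rewrite P_interval; clear Pam; lia.
  by have := Pam l; rewrite mem_iota P_interval //; clear Pam; lia.
split; [lia | | | by rewrite subnKC ?(ltnW al) // P_interval // ltnn andbF].
  by apply/allP => x; rewrite mem_iota => ?; rewrite P_interval; lia.
have [-> // | p_gt0] := posnP p.
by rewrite P_interval; lia.
Qed.

Lemma run_fact_prod_on_interval n :
  p <= l <= n -> run_fact_prod_on n P p l = (l - p)`!.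
Proof.
move=> /andP[pl ln]; rewrite /run_fact_prod_on.
have [p_lt_l | l_le_p] := ltnP p l; last first.
  have -> : l - p = 0 by lia.
  by rewrite big_geq.
rewrite big_ltn // (eq_bigl (pred1 (l - p))); last first.
  by move=> m; rewrite full_runP_interval ?leqnn ?p_lt_l ?eqxx.
rewrite big_nat1_eq (_ : 1 <= l - p < n.+1); last lia.
rewrite big_nat_cond big1 ?muln1 // => a /andP[/andP[pa al] _].
by rewrite big1 // => m; rewrite full_runP_interval ?(ltnW pa) ?al // gtn_eqF.
Qed.

End RunsOfInterval.

Fixpoint gap_fact_prod (k p : nat) (S : seq nat) : nat :=
  if S is l :: S' then (l - p)`! * gap_fact_prod k l.+1 S' else (k - p)`!.

Lemma path_ltn_bounds l S p k :
  path ltn l S -> all (fun x => p <= x < k) S -> all (fun x => l < x < k) S.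
Proof.
move=> /(order_path_min ltn_trans)/allP lS /allP inS.
by apply/allP => x xS; have := lS x xS; have := inS x xS; lia.
Qed.

Lemma run_fact_prod_on_compl k S p :
  sorted ltn S -> all (fun x => p <= x < k) S ->
  run_fact_prod_on k [pred x | p <= x < k & x \notin S] p k = gap_fact_prod k p S.
Proof.
elim: S p => [|l S IHS] p /=.
  move=> _ _; have [pk | kp] := leqP p k; last first.
    have -> : k - p = 0 by lia.
    by rewrite /run_fact_prod_on big_geq // ltnW.
  by apply: run_fact_prod_on_interval; [move=> x _; rewrite /= andbT | rewrite pk leqnn].
move=> sorted_lS /andP[/andP[pl lk] inS].
have lS : all (leq l.+1) S := order_path_min ltn_trans sorted_lS.
have notin_S x : x <= l -> x \notin S.
  by move=> xl; apply/negP => /(allP lS); lia.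
rewrite /run_fact_prod_on (big_cat_nat _ (n := l.+1)) ?big_nat_recr //=; try lia.
rewrite -[\prod_(p <= a < l) _]/(run_fact_prod_on k _ p l).
rewrite run_fact_prod_on_interval; first last.
- by rewrite pl ltnW.
- by move=> x xl; rewrite !inE (negbTE (notin_S x xl)); case: ltngtP; lia.
rewrite big1 ?muln1 => [|m]; last by rewrite full_runP_notin // !inE eqxx andbF.
rewrite -(IHS l.+1 (path_sorted sorted_lS) (path_ltn_bounds sorted_lS inS)).
congr (_ * _); apply: eq_big_nat => a /andP[la _]; apply: eq_bigl => m.
apply: full_runP_eq_from => x ax; rewrite !inE.
case: (ltngtP x l) => [xl | lx | ->] /=; first lia.
  by rewrite (leq_trans pl (ltnW lx)).
by rewrite andbF.
Qed.

Lemma binom_chain_gap_fact_prod k S p :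
  sorted ltn S -> all (fun x => p <= x < k) S -> p <= k ->
  binom_chain k p S * \prod_(l <- S) (k - l) * gap_fact_prod k p S = (k - p)`!.
Proof.
elim: S p => [|l S IHS] p /=; first by rewrite big_nil !mul1n.
move=> sorted_lS /andP[/andP[pl lk] inS] pk.
have := IHS l.+1 (path_sorted sorted_lS) (path_ltn_bounds sorted_lS inS) lk.
have fact_kl : (k - l)`! = (k - l) * (k - l.+1)`!.
  have kl : k - l = (k - l.+1).+1 by lia.
  by rewrite {1}kl factS -kl.
have bin_kl : 'C(k - p, k - l) * (k - l)`! * (l - p)`! = (k - p)`!.
  have -> : l - p = k - p - (k - l) by lia.
  by rewrite -mulnA bin_fact //; lia.
rewrite big_cons -bin_kl fact_kl => <-; ring.
Qed.

Lemma mem_elems k (X : {set 'I_k}) x (x_lt_k : x < k) :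
  (x \in elems X) = (Ordinal x_lt_k \in X).
Proof.
rewrite /elems mem_sort; apply/imageP/idP => [[i Xi x_i] | ?]; last by exists (Ordinal x_lt_k).
by rewrite (_ : Ordinal _ = i) //; apply: val_inj.
Qed.

Lemma elems_lt k (X : {set 'I_k}) : all (fun x => 0 <= x < k) (elems X).
Proof. by apply/allP => x; rewrite /elems mem_sort => /imageP[i _ ->] /=. Qed.

Lemma mem_elemsC k (X : {set 'I_k}) x :
  (x \in elems (~: X)) = (x < k) && (x \notin elems X).
Proof.
have [x_lt_k | k_le_x] := ltnP x k; first by rewrite !mem_elems in_setC.
by apply/negbTE/negP => /(allP (elems_lt _)); lia.
Qed.

Lemma sorted_elems k (X : {set 'I_k}) : sorted ltn (elems X).
Proof.
rewrite ltn_sorted_uniq_leq sort_uniq (sort_sorted leq_total) andbT.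
by rewrite map_inj_uniq ?enum_uniq //; apply: val_inj.
Qed.

Lemma run_fact_prod_elemsC k (X : {set 'I_k}) :
  run_fact_prod k (elems (~: X)) = gap_fact_prod k 0 (elems X).
Proof.
rewrite run_fact_prodE -run_fact_prod_on_compl ?sorted_elems ?elems_lt //.
apply: eq_big_nat => a _; apply: eq_bigl => m.
by apply: full_runP_eq_from => x _; rewrite /= mem_elemsC.
Qed.

Lemma binom_chain_elems k (X : {set 'I_k}) :
  binom_chain k 0 (elems X) * \prod_(l <- elems X) (k - l) * gap_fact_prod k 0 (elems X)
  = k`!.
Proof. by rewrite binom_chain_gap_fact_prod ?sorted_elems ?elems_lt ?subn0. Qed.

Lemma prod_elems_setC k (X : {set 'I_k}) (F : nat -> nat) :
  \prod_(l <- elems X) F l * \prod_(l <- elems (~: X)) F l = \prod_(i < k) F i.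
Proof.
rewrite /elems !(perm_big _ (permEl (perm_sort leq _))) /= !big_image.
by rewrite [RHS](bigID (mem X)) /=; congr (_ * _); apply: eq_bigl => i; rewrite in_setC.
Qed.

Lemma prod_ord_rsub k : \prod_(i < k) (k - i) = k`!.
Proof.
rewrite fact_prod big_add1 big_mkord (reindex_inj rev_ord_inj).
by apply: eq_bigr => i _ /=; have := ltn_ord i; lia.
Qed.

Lemma prod_ord_succ k : \prod_(i < k) (i + 1) = k`!.
Proof. by rewrite fact_prod big_add1 big_mkord; apply: eq_bigr => i; rewrite addn1. Qed.

Lemma term_numerators_mul k (L : {set 'I_k}) :
  run_fact_prod k (elems L) * binom_chain k 0 (elems L)
  * (run_fact_prod k (elems (~: L)) * binom_chain k 0 (elems (~: L))) = k`!.
Proof.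
apply/eqP; rewrite -(eqn_pmul2r (fact_gt0 k)); apply/eqP.
rewrite -{1}(setCK L) !run_fact_prod_elemsC.
rewrite -{1}prod_ord_rsub -(prod_elems_setC L).
rewrite -{1}(binom_chain_elems L) -(binom_chain_elems (~: L)); ring.
Qed.

Lemma term_denominators_mul k (L : {set 'I_k}) :
  \prod_(l <- elems L) ((l + 1) * (k - l)) * \prod_(l <- elems (~: L)) ((l + 1) * (k - l))
  = k`! * k`!.
Proof.
rewrite !big_split /= -{1}prod_ord_succ -prod_ord_rsub.
rewrite -(prod_elems_setC L (addn^~ 1)) -(prod_elems_setC L (subn k)); ring.
Qed.

Theorem claim1 (k : nat) (L : {set 'I_k}) :
  0 < k ->
  (term k (elems L) * term k (elems (~: L)) = 1 / (k`!)%:R)%R.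
Proof.
move=> _. (* the identity holds for k = 0 as well *)
rewrite /term mulf_div -!natrM term_numerators_mul term_denominators_mul natrM.
have fact_neq0 : ((k`!)%:R != 0 :> rat)%R by rewrite pnatr_eq0 -lt0n fact_gt0.
by rewrite invfM mulrA divff.
Qed.
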